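(* Let $\Gamma\neq\mathbb N$ be a numerical semigroup that is a complete intersection. Then $\mathrm e(\Gamma)\le \log_2(\mathrm c(\Gamma))+1$.
   Context: A numerical semigroup $\Gamma$ is a submonoid of $(\mathbb N,+)$ with finite complement in $\mathbb N$. It has a unique minimal generating system $\{r_0,\ldots,r_h\}$, whose cardinality is the embedding dimension $\mathrm e(\Gamma)$. The Frobenius number $\mathrm F(\Gamma)$ is the largest integer not in $\Gamma$, and the conductor is $\mathrm c(\Gamma)=\mathrm F(\Gamma)+1$. Let $\varphi:\mathbb N^{h+1}\to\Gamma$, $\varphi(a)=\sum a_ir_i$; a presentation of $\Gamma$ is a generating set of the congruence $\ker\varphi=\{(a,b):\varphi(a)=\varphi(b)\}$, and a minimal presentation is an inclusion-minimal one (its cardinality is always at least $\mathrm e(\Gamma)-1$). $\Gamma$ is a complete intersection if a minimal presentation has cardinality $\mathrm e(\Gamma)-1$. *)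

From mathcomp Require Import all_boot.
From Stdlib Require Reals.

Set Implicit Arguments.
Unset Strict Implicit.
Unset Printing Implicit Defensive.

Definition numerical_semigroup (S : pred nat) : Prop :=
  [/\ S 0,
      (forall a b, S a -> S b -> S (a + b))
    & exists N, forall n, N <= n -> S n].

Definition vec (k : nat) := {ffun 'I_k -> nat}.
Definition vadd k (a b : vec k) : vec k := [ffun i => a i + b i].

Definition phi k (r : 'I_k -> nat) (a : vec k) : nat := \sum_(i < k) a i * r i.

Definition generates (S : pred nat) k (r : 'I_k -> nat) (P : pred 'I_k) : Prop :=
  forall n, S n <-> exists a : vec k, (forall i, ~~ P i -> a i = 0) /\ n = phi r a.

Definition minimal_generating_system (S : pred nat) k (r : 'I_k -> nat) : Prop :=
  injective r /\ generates S r predT /\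
  forall P : pred 'I_k, generates S r P -> forall i, P i.

Inductive gen_cong k (rho : vec k -> vec k -> Prop) : vec k -> vec k -> Prop :=
| gc_base a b : rho a b -> gen_cong rho a b
| gc_refl a : gen_cong rho a a
| gc_sym a b : gen_cong rho a b -> gen_cong rho b a
| gc_trans a b c : gen_cong rho a b -> gen_cong rho b c -> gen_cong rho a c
| gc_add a b c : gen_cong rho a b -> gen_cong rho (vadd a c) (vadd b c).

Definition presentation k (r : 'I_k -> nat) (rho : vec k -> vec k -> Prop) : Prop :=
  forall a b, gen_cong rho a b <-> phi r a = phi r b.

Definition minimal_presentation k (r : 'I_k -> nat) (rho : seq (vec k * vec k)) : Prop :=
  uniq rho /\ presentation r (fun a b => (a, b) \in rho) /\
  forall sigma : vec k -> vec k -> Prop,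
    (forall a b, sigma a b -> (a, b) \in rho) ->
    presentation r sigma -> forall a b, (a, b) \in rho -> sigma a b.

(* Gamma (with minimal generating system r of size k = e(Gamma)) is a complete
   intersection: a minimal presentation has cardinality e(Gamma) - 1. *)
Definition complete_intersection k (r : 'I_k -> nat) : Prop :=
  exists rho : seq (vec k * vec k), minimal_presentation r rho /\ size rho = k - 1.

Definition frobenius (S : pred nat) (f : nat) : Prop :=
  ~~ S f /\ forall n, f < n -> S n.

From mathcomp Require Import all_boot all_order.
From mathcomp Require Import zify.
From Stdlib Require Import Classical.

(* Let [rho] be a presentation of Gamma with [e - 1] relations, [e] the number
   of minimal generators. For a nonempty set [R] of generators, at least as
   many relations as there are generators outside [R] have a side avoiding
   [R]; with only [e - 1] relations this forces the supports of the relations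
   to form a tree, so one relation [wA = wB] splits the generators into blocks
   [A] and [B] with every other relation inside a block. Then Gamma is the
   gluing of the semigroups generated by [A] and [B] along [d = phi wA]: the
   remaining relations present each block, [d] divides [lcm (gcd A) (gcd B)],
   and [d] is at least twice every generator of either block by minimality.
   By induction every generator is at least [2 ^ (e - 1)] times the gcd, which
   is [1]; since some generator is at most the conductor, [e - 1 <= log2 c]. *)

Set Implicit Arguments.
Unset Strict Implicit.
Unset Printing Implicit Defensive.

Lemma disjoint_setD (T : finType) (P A : {set T}) : [disjoint A & P :\: A].
Proof. by rewrite -setI_eq0 setDE setICA setICr setI0. Qed.

Lemma count_disjoint_le (T : eqType) (a b : pred T) (s : seq T) :
  (forall x, a x -> b x -> false) -> count a s + count b s <= size s.
Proof.
move=> Hab; rewrite -count_predUI (@eq_count _ (predI a b) pred0).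
  by rewrite count_pred0 addn0 count_size.
by move=> x /=; case Ha: (a x); case Hb: (b x) => //=; have := Hab x Ha Hb.
Qed.

Lemma count_andb_addn_neqb (T : eqType) (a b : pred T) (s : seq T) :
  count (fun x => a x && b x) s + count (fun x => a x != b x) s = count (fun x => a x || b x) s.
Proof.
rewrite -count_predUI (@eq_count _ (predI _ _) pred0) ?count_pred0 ?addn0.
  by apply: eq_count => x /=; case: (a x); case: (b x).
by move=> x /=; case: (a x); case: (b x).
Qed.

Lemma count_rem_mem (T : eqType) (a : pred T) (x : T) (s : seq T) :
  x \in s -> count a s = a x + count a (rem x s).
Proof. by move=> Hx; move/permP: (perm_to_rem Hx) => ->. Qed.

Lemma lcmn_gcdl (a b c : nat) : lcmn (gcdn a b) c = gcdn (lcmn a c) (lcmn b c).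
Proof. exact: (@Order.joinIl _ natdvd a b c). Qed.

Lemma lcmn_biggcdl (I : finType) (A : {pred I}) (F : I -> nat) c :
  lcmn (\big[gcdn/0]_(i in A) F i) c = \big[gcdn/0]_(i in A) lcmn (F i) c.
Proof.
elim/big_rec2: _ => [|i x y _ <-]; first by rewrite /lcmn mul0n div0n.
by rewrite lcmn_gcdl.
Qed.

(* [a = lcm * gcd / b >= d * gcd / b >= c * gcd]. *)
Lemma gcdn_le_of_dvd_lcm (a b c d : nat) : 0 < a -> 0 < b ->
  d %| lcmn a b -> c * b <= d -> c * gcdn a b <= a.
Proof.
move=> a0 b0 Hd Hc; rewrite -(leq_pmul2r b0) mulnAC.
apply: (@leq_trans (d * gcdn a b)); first by rewrite leq_mul2r Hc orbT.
rewrite -(muln_lcm_gcd a b) leq_mul2r; apply/orP; right.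
by apply: dvdn_leq Hd; rewrite lcmn_gt0 a0.
Qed.

Lemma gcdn_glue_le (gX gY D cX cY x : nat) : 0 < gX -> 0 < gY ->
  D %| lcmn gX gY -> 2 * (2 ^ cY * gY) <= D -> 2 ^ cX * gX <= x ->
  2 ^ (cX + cY).+1 * gcdn gX gY <= x.
Proof.
move=> gX0 gY0 Hdvd HD Hx.
have Hg : 2 ^ cY.+1 * gcdn gX gY <= gX.
  by apply: (gcdn_le_of_dvd_lcm gX0 gY0 Hdvd); rewrite expnS -mulnA.
by apply: leq_trans Hx; rewrite -addnS expnD -mulnA leq_mul2l Hg orbT.
Qed.

Lemma tight_count_bounds (a b : bool) (nA nB cA cB : nat) : 0 < nB -> 0 < nA ->
  cA + cB = (nA + nB).-2 -> nA <= b + cA -> nB <= a + cB -> [/\ a, b, nA = cA.+1 & nB = cB.+1].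
Proof. by case: a; case: b => /=; split => //; lia. Qed.

Section SeparatingLabel.
Variable T : finType.
(* A label records the supports of the two sides of a relation. *)
Local Notation label := ({set T} * {set T})%type.

Definition meets_both (R : {set T}) (l : label) := (l.1 :&: R != set0) && (l.2 :&: R != set0).
Definition label_within (A : {set T}) (l : label) := (l.1 :|: l.2) \subset A.
Definition proper_label (W : {set T}) (l : label) :=
  [&& l.1 \subset W, l.2 \subset W, l.1 != set0, l.2 != set0 & [disjoint l.1 & l.2]].
Definition sparse (W : {set T}) (L : seq label) :=
  forall R : {set T}, R \subset W -> R != set0 -> count (meets_both R) L < #|R|.

Lemma eq_set1_of_disjoint_setD1 (W S : {set T}) v :
  S \subset W -> S != set0 -> S :&: (W :\ v) == set0 -> S = [set v].
Proof.
move=> HS /set0Pn[y Hy] /eqP HSW.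
have inSv x : x \in S -> x = v.
  move=> Hx; apply/eqP/negPn/negP => Hxv.
  have : x \in S :&: (W :\ v) by rewrite !inE Hx Hxv (subsetP HS).
  by rewrite HSW inE.
apply/setP => x; rewrite inE; apply/idP/eqP => [/inSv //|->].
by rewrite -(inSv y Hy).
Qed.

(* With [#|W| - 1] labels and no [W :\ v] met on both sides, every point
   [v] is a singleton side of some label; pigeonhole on [W] then yields a
   label both of whose sides are singletons. *)
Lemma exists_singleton_label (W : {set T}) (L : seq label) :
  1 < #|W| -> size L = #|W|.-1 -> (forall l, l \in L -> proper_label W l) -> sparse W L ->
  exists p q, p != q /\ ([set p], [set q]) \in L.
Proof.
move=> HW HL Hg Hc.
pose P v (l : label) := (l.1 == [set v]) || (l.2 == [set v]).
have Hex v : v \in W -> has (P v) L.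
  move=> Hv.
  have HR : W :\ v != set0.
    by rewrite -card_gt0; move: HW; rewrite (cardsD1 v W) Hv add1n ltnS.
  have Hlt := Hc _ (subD1set W v) HR.
  have Hcard : #|W| = (#|W :\ v|).+1 by rewrite (cardsD1 v W) Hv.
  have : has (predC (meets_both (W :\ v))) L.
    have := count_predC (meets_both (W :\ v)) L.
    rewrite has_count; lia.
  case/hasP => l Hl /= Hnt; apply/hasP; exists l => //.
  case/and5P: (Hg l Hl) => H1 H2 H3 H4 _.
  move: Hnt; rewrite /meets_both negb_and !negbK => /orP[E|E].
    by rewrite /P (eq_set1_of_disjoint_setD1 H1 H3 E) eqxx.
  by rewrite /P (eq_set1_of_disjoint_setD1 H2 H4 E) eqxx orbT.
pose g v := nth (set0, set0) L (find (P v) L).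
have HgL v : v \in W -> g v \in L by move=> Hv; rewrite mem_nth // -has_find Hex.
have HgP v : v \in W -> P v (g v) by move=> Hv; apply: nth_find; apply: Hex.
case: (boolP [forall v in W, forall w in W, (g v == g w) ==> (v == w)]) => Hinj.
  have Hu : uniq (map g (enum W)).
    rewrite map_inj_in_uniq ?enum_uniq // => v w; rewrite !mem_enum => Hv Hw E.
    by move/forall_inP: Hinj => /(_ v Hv) /forall_inP /(_ w Hw); rewrite E eqxx => /eqP.
  have Hs : {subset map g (enum W) <= L}.
    by move=> l /mapP[v]; rewrite mem_enum => Hv ->; apply: HgL.
  by have := uniq_leq_size Hu Hs; rewrite size_map -cardE HL; lia.
move: Hinj; rewrite negb_forall_in => /exists_inP[v Hv].
rewrite negb_forall_in => /exists_inP[w Hw]; rewrite negb_imply => /andP[/eqP E Hvw].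
have Pv := HgP v Hv; have Pw := HgP w Hw; rewrite E in Pv.
move: (HgL w Hw); case: (g w) Pv Pw => a b /=; rewrite /P /=.
case/orP => /eqP-> /orP[/eqP Ew|/eqP Ew].
- by move: Hvw; rewrite -(set1_inj Ew) eqxx.
- by rewrite Ew => H; exists v, w.
- by rewrite Ew => H; exists w, v; rewrite eq_sym.
- by move: Hvw; rewrite -(set1_inj Ew) eqxx.
Qed.

Lemma meets_imset (h : T -> T) (S R' W : {set T}) : S \subset W ->
  (h @: S :&: R' != set0) = (S :&: [set x in W | h x \in R'] != set0).
Proof.
move=> HS; apply/idP/idP => /set0Pn[y].
  rewrite inE => /andP[/imsetP[x Hx ->] Hy]; apply/set0Pn; exists x.
  by rewrite !inE Hx (subsetP HS) // Hy.
rewrite !inE => /andP[Hy /andP[_ Hhy]]; apply/set0Pn; exists (h y).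
by rewrite inE Hhy imset_f.
Qed.

Section Contraction.
Variables (W : {set T}) (L : seq label) (p q : T).
Hypotheses (Hpq : p != q) (Hl1 : ([set p], [set q]) \in L).
Hypotheses (Hg : forall l, l \in L -> proper_label W l) (Hc : sparse W L).

Definition merge x := if x == q then p else x.
Definition merge_label (l : label) : label := (merge @: l.1, merge @: l.2).
Local Notation l1 := ([set p], [set q]).

Let HpW : p \in W.
Proof. by case/and5P: (Hg Hl1) => /subsetP H _ _ _ _; apply: H; rewrite inE. Qed.
Let HqW : q \in W.
Proof. by case/and5P: (Hg Hl1) => _ /subsetP H _ _ _; apply: H; rewrite inE. Qed.

Let count_L (a : pred label) : count a L = a l1 + count a (rem l1 L).
Proof. by move/permP: (perm_to_rem Hl1) => ->. Qed.

Lemma merge_in x : x \in W -> merge x \in W :\ q.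
Proof.
rewrite /merge => Hx; case: eqP => [_|/eqP Hxq]; rewrite !inE.
  by rewrite Hpq HpW.
by rewrite Hxq Hx.
Qed.

Lemma merge_id x : x != q -> merge x = x.
Proof. by rewrite /merge => /negbTE ->. Qed.

(* Two sides of a label merged together would make [{p, q}] met on both
   sides by two labels, against sparseness. *)
Lemma merge_proper l : l \in map merge_label (rem l1 L) -> proper_label (W :\ q) l.
Proof.
case/mapP=> {}l Hl ->; case/and5P: (Hg (mem_rem Hl)) => H1 H2 H3 H4 H5.
apply/and5P; split => /=.
- by apply/subsetP => y /imsetP[x Hx ->]; apply: merge_in; apply: (subsetP H1).
- by apply/subsetP => y /imsetP[x Hx ->]; apply: merge_in; apply: (subsetP H2).
- by rewrite imset_eq0.
- by rewrite imset_eq0.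
rewrite -setI_eq0; apply: contraT.
case/set0Pn => y; rewrite inE => /andP[/imsetP[x1 Hx1 ->] /imsetP[x2 Hx2 E]].
have [E12|N12] := eqVneq x1 x2; first by move: Hx2; rewrite -E12 (disjointFr H5 Hx1).
have Ht : meets_both [set p; q] l.
  move: E; rewrite /merge; case: eqP => [E1|/eqP N1]; case: eqP => [E2|/eqP N2].
  - by move: N12; rewrite E1 E2 eqxx.
  - move=> E; apply/andP; split; apply/set0Pn.
      by exists x1; rewrite !inE Hx1 E1 eqxx orbT.
    by exists x2; rewrite !inE Hx2 -E eqxx.
  - move=> E; apply/andP; split; apply/set0Pn.
      by exists x1; rewrite !inE Hx1 E eqxx.
    by exists x2; rewrite !inE Hx2 E2 eqxx orbT.
  - by move=> E; move: N12; rewrite E eqxx.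
have Ht1 : meets_both [set p; q] l1.
  by apply/andP; split; apply/set0Pn; [exists p | exists q]; rewrite !inE eqxx ?orbT.
have HRs : [set p; q] \subset W by rewrite subUset !sub1set HpW HqW.
have HRn : [set p; q] != set0 by apply/set0Pn; exists p; rewrite !inE eqxx.
have := Hc HRs HRn; rewrite count_L Ht1 cards2 Hpq /= add1n !ltnS leqn0.
by rewrite -[_ == 0]negbK -lt0n -has_count => /hasPn/(_ l Hl); rewrite Ht.
Qed.

Lemma merge_sparse : sparse (W :\ q) (map merge_label (rem l1 L)).
Proof.
move=> R' HR' HR'n.
set R := [set x in W | merge x \in R'].
have Hcnt : count (meets_both R') (map merge_label (rem l1 L)) = count (meets_both R) (rem l1 L).
  rewrite count_map; apply: eq_in_count => l Hl.
  case/and5P: (Hg (mem_rem Hl)) => H1 H2 _ _ _.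
  by rewrite /meets_both /= !(meets_imset _ _ H1) !(meets_imset _ _ H2).
have HR'W : R' \subset W by apply: subset_trans HR' (subD1set _ _).
have HqR' : q \notin R' by apply/negP => /(subsetP HR'); rewrite !inE eqxx.
have HRsub : R \subset W by apply/subsetP => x; rewrite inE => /andP[].
have inR x : x != q -> (x \in R) = (x \in R').
  move=> Hxq; rewrite inE merge_id //.
  by apply/andP/idP => [[]//|Hx]; split => //; apply: (subsetP HR'W).
case HpR': (p \in R').
  have ER : R = q |: R'.
    apply/setP => x; case: (eqVneq x q) => [->|Hxq]; last by rewrite inR // !inE (negbTE Hxq).
    by rewrite !inE /merge eqxx HqW HpR'.
  have HRn : R != set0 by apply/set0Pn; exists q; rewrite ER !inE eqxx.
  have := Hc HRsub HRn; rewrite count_L Hcnt ER cardsU1 HqR'.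
  have -> : meets_both (q |: R') l1.
    by apply/andP; split; apply/set0Pn; [exists p | exists q]; rewrite !inE eqxx ?HpR' ?orbT.
  by rewrite add1n add1n ltnS.
have ER : R = R'.
  apply/setP => x; case: (eqVneq x q) => [->|Hxq]; last by rewrite inR.
  by rewrite inE /merge eqxx HqW HpR' (negbTE HqR').
have HRn : R != set0 by rewrite ER.
have := Hc HRsub HRn; rewrite count_L Hcnt ER.
by apply: leq_ltn_trans; apply: leq_addl.
Qed.

Lemma merge_within (A' : {set T}) l : l \in rem l1 L ->
  label_within A' (merge_label l) -> label_within [set x in W | merge x \in A'] l.
Proof.
move=> Hl /subsetP Hs; case/and5P: (Hg (mem_rem Hl)) => H1 H2 _ _ _.
apply/subsetP => x Hx; rewrite inE; apply/andP; split.
  by case/setUP: Hx => [/(subsetP H1)|/(subsetP H2)].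
by apply: Hs; case/setUP: Hx => Hx; apply/setUP; [left|right]; apply: imset_f.
Qed.

Lemma merge_separation (A' : {set T}) (L0 : seq label) (m0 : label) :
  perm_eq (map merge_label (rem m0 (rem l1 L))) L0 ->
  [/\ A' \subset W :\ q, A' != set0, (W :\ q) :\: A' != set0 &
      forall l, l \in L0 -> label_within A' l \/ label_within ((W :\ q) :\: A') l] ->
  exists A : {set T}, [/\ A \subset W, A != set0, W :\: A != set0 &
      forall l, l \in l1 :: rem m0 (rem l1 L) -> label_within A l \/ label_within (W :\: A) l].
Proof.
move=> HP [HA'W HA'n HA'c HA']; set A := [set x in W | merge x \in A'].
exists A; split.
- by apply/subsetP => x; rewrite inE => /andP[].
- case/set0Pn: HA'n => y Hy; move: (subsetP HA'W y Hy); rewrite !inE => /andP[Hyq HyW].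
  by apply/set0Pn; exists y; rewrite !inE HyW merge_id.
- case/set0Pn: HA'c => y; rewrite !inE => /andP[Hy /andP[Hyq HyW]].
  by apply/set0Pn; exists y; rewrite !inE HyW merge_id // Hy.
move=> l; rewrite inE => /orP[/eqP ->|Hl].
  have Hm : merge q = merge p by rewrite /merge eqxx; case: ifP.
  case HpA': (merge p \in A'); [left|right];
    by apply/subsetP => x; rewrite !inE => /orP[] /eqP ->; rewrite ?HpW ?HqW ?Hm HpA'.
have Hl' : l \in rem l1 L := mem_rem Hl.
have HfL : merge_label l \in L0 by rewrite -(perm_mem HP); apply: map_f.
case: (HA' _ HfL) => Hw; [left|right]; first exact: (merge_within Hl' Hw : label_within A l).
apply/subsetP => x Hx; move/subsetP: (merge_within Hl' Hw) => /(_ x Hx).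
by rewrite !inE => /andP[HxW Hm]; rewrite HxW andbT; apply: contraL Hm => /andP[_ ->].
Qed.

End Contraction.

(* A sparse family of [#|W| - 1] proper labels is a tree: one label separates
   [W] into two parts, and every other label lies within one of them. *)
Lemma separating_label n : forall (W : {set T}) (L : seq label), #|W| = n.+2 -> size L = n.+1 ->
  (forall l, l \in L -> proper_label W l) -> sparse W L ->
  exists l0 L0, perm_eq L (l0 :: L0) /\ exists A : {set T},
    [/\ A \subset W, A != set0, W :\: A != set0 &
        forall l, l \in L0 -> label_within A l \/ label_within (W :\: A) l].
Proof.
elim: n => [|n IH] W L HW HL Hg Hc.
  case: L HL Hg Hc => [//|l [|//]] _ Hg Hc.
  exists l, [::]; split => //.
  have : 0 < #|W| by rewrite HW.
  case/card_gt0P => x Hx; exists [set x]; split => //.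
  - by rewrite sub1set.
  - by apply/set0Pn; exists x; rewrite inE.
  - by rewrite -card_gt0 cardsD (setIidPr _) ?sub1set // cards1 HW.
have HW1 : 1 < #|W| by rewrite HW.
have HL1 : size L = #|W|.-1 by rewrite HL HW.
have [p [q [Hpq Hl1]]] := exists_singleton_label HW1 HL1 Hg Hc.
set l1 := ([set p], [set q]) in Hl1.
have HqW : q \in W by case/and5P: (Hg _ Hl1) => _ /subsetP -> //; rewrite inE.
have HW' : #|W :\ q| = n.+2 by move: HW; rewrite (cardsD1 q W) HqW add1n => -[].
have HL' : size (map (merge_label p q) (rem l1 L)) = n.+1 by rewrite size_map size_rem // HL.
have [l0' [L0' [HP' HA']]] :=
  IH _ _ HW' HL' (merge_proper Hpq Hl1 Hg Hc) (merge_sparse Hl1 Hg Hc).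
have : l0' \in map (merge_label p q) (rem l1 L) by rewrite (perm_mem HP') mem_head.
case/mapP => m0 Hm0 Em0.
have HP2 : perm_eq (map (merge_label p q) (rem m0 (rem l1 L))) L0'.
  rewrite -(perm_cons l0'); apply: perm_trans HP'.
  by rewrite Em0 -map_cons; apply: perm_map; rewrite perm_sym perm_to_rem.
exists m0, (l1 :: rem m0 (rem l1 L)); split; last first.
  by case: HA' => A' HA'; exact: (merge_separation Hl1 Hg HP2 HA').
apply: (perm_trans (perm_to_rem Hl1)).
apply: (@perm_trans _ (l1 :: m0 :: rem m0 (rem l1 L))).
  by rewrite perm_cons; apply: perm_to_rem.
by rewrite (perm_catCA [:: l1] [:: m0]).
Qed.
End SeparatingLabel.

Section Vectors.
Variable k : nat.
Variable r : 'I_k -> nat.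
Local Notation vec := (vec k).

Definition vzero : vec := [ffun => 0].
Definition vrestr (A : {set 'I_k}) (x : vec) : vec := [ffun i => if i \in A then x i else 0].
Definition vunit (i : 'I_k) (n : nat) : vec := [ffun j => if j == i then n else 0].
Definition vscale (n : nat) (x : vec) : vec := [ffun j => n * x j].
Definition vle (x y : vec) := forall i, x i <= y i.
Definition supp (x : vec) : {set 'I_k} := [set i | x i != 0].
Definition vsupp (A : {set 'I_k}) (x : vec) := forall i, i \notin A -> x i = 0.
Definition avoids (S : {set 'I_k}) (x : vec) := [forall i in S, x i == 0].
Definition avoids_side (S : {set 'I_k}) (p : vec * vec) := avoids S p.1 || avoids S p.2.
Definition cong (rho : seq (vec * vec)) := gen_cong (fun a b => (a, b) \in rho).

Lemma avoidsP (S : {set 'I_k}) (x : vec) : reflect (forall i, i \in S -> x i = 0) (avoids S x).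
Proof. by apply: (iffP forall_inP) => H i Hi; apply/eqP; apply: H. Qed.

Lemma exists_coord_neq0 (u : vec) : u != vzero -> exists s, u s != 0.
Proof.
move=> Hu; apply/existsP; apply: contraR Hu => /existsPn H.
by apply/eqP/ffunP => i; rewrite ffunE; move: (H i); rewrite negbK => /eqP.
Qed.

Lemma vsuppE (A : {set 'I_k}) (x : vec) : vsupp A x <-> supp x \subset A.
Proof.
split => [H|/subsetP H i Hi]; last by apply/eqP; apply: contraR Hi => Hxi; apply: H; rewrite inE.
by apply/subsetP => i; rewrite inE; apply: contraR => /H ->.
Qed.

Lemma vsupp_sub (A B : {set 'I_k}) (x : vec) : A \subset B -> vsupp A x -> vsupp B x.
Proof. by move=> /subsetP HAB H i Hi; apply: H; apply: contra Hi; apply: HAB. Qed.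

Lemma vsupp_setD (P A : {set 'I_k}) (x : vec) : vsupp P x -> avoids A x -> vsupp (P :\: A) x.
Proof.
move=> Hv /avoidsP Hr i; rewrite !inE negb_and negbK.
by case/orP => [/Hr|/Hv].
Qed.

Lemma vsupp_avoids (A B : {set 'I_k}) (x : vec) : vsupp A x -> [disjoint A & B] -> avoids B x.
Proof.
move=> Hv HAB; apply/avoidsP => i Hi; apply: Hv.
by rewrite (disjointFr (_ : [disjoint B & A]) Hi) // disjoint_sym.
Qed.

Lemma vsupp_avoidsF (A : {set 'I_k}) (x : vec) : vsupp A x -> x != vzero -> avoids A x = false.
Proof.
move=> Hv Hx; apply/negP => /avoidsP Hs; apply/negP: Hx; apply/negPn/eqP/ffunP => i.
by rewrite ffunE; case: (boolP (i \in A)) => [/Hs|/Hv].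
Qed.

Lemma phi0 : phi r vzero = 0.
Proof. by rewrite /phi big1 // => i _; rewrite ffunE. Qed.

Lemma phiD a b : phi r (vadd a b) = phi r a + phi r b.
Proof. by rewrite /phi -big_split; apply: eq_bigr => i _; rewrite ffunE mulnDl. Qed.

Lemma phiZ n a : phi r (vscale n a) = n * phi r a.
Proof. by rewrite /phi big_distrr; apply: eq_bigr => i _; rewrite ffunE -mulnA. Qed.

Lemma phi_unit i n : phi r (vunit i n) = n * r i.
Proof.
rewrite /phi (bigD1 i) //= big1 ?addn0; first by rewrite ffunE eqxx.
by move=> j Hj; rewrite ffunE (negbTE Hj).
Qed.

Lemma phi_vrestr A x : phi r (vrestr A x) = \sum_(i in A) x i * r i.
Proof.
rewrite /phi (bigID (mem A)) /= addnC big1 ?add0n.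
  by apply: eq_bigr => i Hi; rewrite ffunE Hi.
by move=> i Hi; rewrite ffunE (negbTE Hi).
Qed.

Lemma phi_ge (x : vec) i : x i * r i <= phi r x.
Proof. by rewrite /phi (bigD1 i) //= leq_addr. Qed.

Lemma gen_cong_sub (R1 R2 : vec -> vec -> Prop) :
  (forall a b, R1 a b -> gen_cong R2 a b) -> forall a b, gen_cong R1 a b -> gen_cong R2 a b.
Proof.
move=> H a b; elim=> {a b}.
- by move=> a b /H.
- by move=> a; apply: gc_refl.
- by move=> a b _ IH; apply: gc_sym.
- by move=> a b c _ IH1 _ IH2; apply: gc_trans IH2.
- by move=> a b c _ IH; apply: gc_add.
Qed.

Section Avoiding.
Variables (S : {set 'I_k}) (rho : seq (vec * vec)).

Definition avoiding_rels := [seq p <- rho | avoids S p.1 && avoids S p.2].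
Definition half_avoiding_sides :=
  [seq (if avoids S p.1 then p.1 else p.2) | p <- rho & avoids S p.1 != avoids S p.2].

Lemma cong_avoiding_eq x y : cong avoiding_rels x y -> forall i, i \in S -> x i = y i.
Proof.
elim=> {x y}.
- move=> a b; rewrite mem_filter => /andP[/andP[/avoidsP Ha /avoidsP Hb] _] i Hi.
  by rewrite Ha ?Hb.
- by [].
- by move=> a b _ IH i Hi; rewrite IH.
- by move=> a b c _ IH1 _ IH2 i Hi; rewrite IH1 ?IH2.
- by move=> a b c _ IH i Hi; rewrite !ffunE IH.
Qed.

(* [x] lies on the face [avoids S] and no relation of [rho] leads out of it
   (see [cong_stuck]). *)
Definition stuck x := avoids S x /\
  forall x', cong avoiding_rels x x' -> forall u, u \in half_avoiding_sides -> ~ vle u x'.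

Lemma stuck_cong x y : stuck x -> cong avoiding_rels x y -> stuck y.
Proof.
move=> [Hs Hu] Hxy; split.
  by apply/avoidsP => i Hi; rewrite -(cong_avoiding_eq Hxy Hi); move/avoidsP: Hs; apply.
by move=> x' Hy; apply: Hu; apply: gc_trans Hy.
Qed.

Lemma stuck_addr (a c : vec) : stuck (vadd a c) -> stuck a.
Proof.
move=> [/avoidsP Hs Hu]; split.
  by apply/avoidsP => i Hi; have := Hs i Hi; rewrite ffunE; case: (a i).
move=> a' Ha' u Hu' Hle; apply: (Hu (vadd a' c)) Hu' _.
  by apply: gc_sym; apply: gc_add; apply: gc_sym.
by move=> i; rewrite ffunE; apply: leq_trans (Hle i) (leq_addr _ _).
Qed.

Lemma cong_stuck x y : cong rho x y -> stuck x \/ stuck y -> cong avoiding_rels x y.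
Proof.
elim=> {x y}.
- move=> a b Hab [[Ha Hu]|[Hb Hu]].
  + case Hbb: (avoids S b).
      by apply: gc_base; rewrite mem_filter Hab Hbb Ha.
    exfalso; apply: (Hu a (gc_refl _ _) a) => //.
    by apply/mapP; exists (a, b) => /=; rewrite ?mem_filter ?Hab /= ?Hbb Ha.
  + case Haa: (avoids S a).
      by apply: gc_base; rewrite mem_filter Hab Haa Hb.
    exfalso; apply: (Hu b (gc_refl _ _) b) => //.
    by apply/mapP; exists (a, b) => /=; rewrite ?mem_filter ?Hab /= ?Haa ?Hb.
- by move=> a _; apply: gc_refl.
- by move=> a b _ IH H; apply: gc_sym; apply: IH; case: H; auto.
- move=> a b c _ IH1 _ IH2 [Ga|Gc].
  + have Hab := IH1 (or_introl Ga).
    by apply: gc_trans Hab (IH2 (or_introl (stuck_cong Ga Hab))).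
  + have Hbc := IH2 (or_intror Gc).
    have Gb : stuck b by apply: stuck_cong Gc (gc_sym Hbc).
    by apply: gc_trans (IH1 (or_intror Gb)) Hbc.
- move=> a b c _ IH [G|G]; apply: gc_add; apply: IH.
  + by left; apply: stuck_addr G.
  + by right; apply: stuck_addr G.
Qed.

Lemma size_avoiding : size avoiding_rels + size half_avoiding_sides <= size rho.
Proof.
rewrite size_map !size_filter; apply: count_disjoint_le => p /=.
by case/andP => -> ->.
Qed.

End Avoiding.

Definition escapes (I : seq (vec * vec)) (U : seq vec) x :=
  exists x', cong I x x' /\ exists2 u, u \in U & vle u x'.
Definition rels_on (Q : {set 'I_k}) (I : seq (vec * vec)) :=
  forall p, p \in I -> [/\ vsupp Q p.1, vsupp Q p.2, p.1 != vzero & p.2 != vzero].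
Definition sides_on (Q : {set 'I_k}) (U : seq vec) :=
  forall u, u \in U -> vsupp Q u /\ u != vzero.
Definition escape_or_bounded (Q : {set 'I_k}) I U :=
  exists N, forall x, vsupp Q x -> escapes I U x \/ forall i, x i <= N.

Lemma rels_on_avoiding Q S I : rels_on Q I -> rels_on (Q :\: S) (avoiding_rels S I).
Proof.
move=> HI p; rewrite mem_filter => /andP[/andP[Hp1 Hp2] /HI[? ? ? ?]].
by split => //; apply: vsupp_setD.
Qed.

Lemma sides_on_half_avoiding Q S I : rels_on Q I -> sides_on (Q :\: S) (half_avoiding_sides S I).
Proof.
move=> HI v /mapP[p]; rewrite mem_filter => /andP[Hx /HI[H1 H2 H3 H4]] ->.
case: ifP Hx => Hp1 Hx; split => //; apply: vsupp_setD => //.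
by move: Hx; case: (avoids S p.2).
Qed.

Section EscapeStep.
Variables (Q : {set 'I_k}) (I : seq (vec * vec)) (U : seq vec) (s : 'I_k).
Local Notation I' := (avoiding_rels [set s] I).
Local Notation U' := ([seq v <- U | avoids [set s] v] ++ half_avoiding_sides [set s] I).

Let avoids_s (v : vec) : avoids [set s] v -> v s = 0.
Proof. by move/avoidsP; apply; rewrite inE. Qed.

Lemma sides_on_avoiding : rels_on Q I -> sides_on Q U -> sides_on (Q :\ s) U'.
Proof.
move=> HI HU v; rewrite mem_cat => /orP[|/(sides_on_half_avoiding HI)//].
by rewrite mem_filter => /andP[Hv /HU[? ?]]; split => //; apply: vsupp_setD.
Qed.

(* If [x] escapes through [I] but not through [I'], it is stuck, so
   [cong_stuck] moves the escape inside [I']; its target then avoids [s]. *)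
Lemma escape_or_bounded_avoiding :
  escape_or_bounded Q I U -> escape_or_bounded (Q :\ s) I' U'.
Proof.
move=> [N HN]; exists N => x Hx.
have HxQ : vsupp Q x by apply: vsupp_sub Hx; apply: subD1set.
have Hxs : x s = 0 by apply: Hx; rewrite !inE eqxx.
case: (classic (escapes I' U' x)) => [|Hne]; first by left.
right; case: (HN x HxQ) => // -[x' [Hxx' [w Hw Hwx]]].
have Gx : stuck [set s] I x.
  split; first by apply/avoidsP => i; rewrite inE => /eqP ->.
  move=> x'' Hx'' w' Hw' Hle; apply: Hne; exists x''; split => //.
  by exists w' => //; rewrite mem_cat Hw' orbT.
have Hc := cong_stuck Hxx' (or_introl Gx).
exfalso; apply: Hne; exists x'; split => //; exists w => //.
rewrite mem_cat mem_filter Hw andbT; apply/orP; left.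
apply/avoidsP => i; rewrite inE => /eqP ->.
have Hx's : x' s = 0 by rewrite -(cong_avoiding_eq Hc (set11 s)).
by move: (Hwx s); rewrite Hx's leqn0 => /eqP.
Qed.

Lemma size_avoiding_step u : u \in U -> u s != 0 ->
  (size I' + size U').+1 <= size I + size U.
Proof.
move=> Hu Hus; rewrite size_cat addnA.
have := size_avoiding [set s] I.
have : size [seq v <- U | avoids [set s] v] < size U.
  rewrite size_filter -(count_predC (avoids [set s]) U) -addn1 leq_add2l -has_count.
  by apply/hasP; exists u => //=; apply: contra Hus => /avoids_s ->.
lia.
Qed.

End EscapeStep.

(* A rank bound: each coordinate met by an escape target is paid for by a
   target or a relation. *)
Lemma escape_bound n (Q : {set 'I_k}) I U : #|Q| = n ->
  rels_on Q I -> sides_on Q U -> escape_or_bounded Q I U -> n <= size I + size U.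
Proof.
elim: n Q I U => [//|n IH] Q I U HQ HI HU HN.
case: U HU HN => [|u U0] HU [N HN].
  have [s Hs] : exists s, s \in Q by apply/card_gt0P; rewrite HQ.
  have Hx : vsupp Q (vunit s N.+1).
    by move=> i Hi; rewrite ffunE; case: eqP => // E; rewrite E Hs in Hi.
  case: (HN _ Hx) => [[x' [_ [w]]] //| Hb].
  by have := Hb s; rewrite ffunE eqxx ltnn.
have Hu := mem_head u U0.
have [Hsu Hu0] := HU u Hu.
have [s Hs] := exists_coord_neq0 Hu0.
have HsQ : s \in Q by apply: contraR Hs => /Hsu ->.
have HQ' : #|Q :\ s| = n by move: HQ; rewrite (cardsD1 s) HsQ add1n => -[].
have := IH _ _ _ HQ' (rels_on_avoiding (S := [set s]) HI) (sides_on_avoiding (s := s) HI HU)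
  (escape_or_bounded_avoiding s (ex_intro _ N HN)).
by move/leq_ltn_trans; apply; apply: size_avoiding_step Hs.
Qed.

Definition presents (P : {set 'I_k}) (rho : seq (vec * vec)) :=
  forall x y, vsupp P x -> vsupp P y -> phi r x = phi r y -> cong rho x y.

Section Counting.
Variables (P : {set 'I_k}) (rho : seq (vec * vec)).
Hypotheses (Hpos : forall i, i \in P -> 0 < r i) (Hcomp : presents P rho).

(* If [x i > r i0] with [i0 \in R], trading [r i0] copies of [r i] for
   [r i] copies of [r i0] gives a [rho]-congruent vector that does not avoid
   [R]; so [x] is not stuck, i.e. it escapes. *)
Lemma escape_or_bounded_setD (R : {set 'I_k}) i0 :
  i0 \in R -> i0 \in P ->
  escape_or_bounded (P :\: R) (avoiding_rels R rho) (half_avoiding_sides R rho).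
Proof.
move=> Hi0 Hi0P; exists (r i0) => x Hx.
case: (classic (escapes (avoiding_rels R rho) (half_avoiding_sides R rho) x)) => [|Hne].
  by left.
right => i; case: (leqP (x i) (r i0)) => // Hlt; exfalso.
have HiQ : i \in P :\: R by apply: contraLR Hlt => /Hx ->.
have HiP : i \in P by move: HiQ; rewrite inE => /andP[].
set z : vec := [ffun j => if j == i then x i - r i0 else x j].
have Ex : x = vadd (vunit i (r i0)) z.
  apply/ffunP => j; rewrite !ffunE; case: eqP => [->|]; last by rewrite add0n.
  by rewrite subnKC // ltnW.
set y := vadd (vunit i0 (r i)) z.
have HxP : vsupp P x by move=> j Hj; apply: Hx; rewrite inE negb_and Hj orbT.
have HyP : vsupp P y.
  move=> j Hj; rewrite !ffunE; case: eqP => [E|_]; first by rewrite E Hi0P in Hj.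
  case: eqP => [E|_]; first by rewrite E HiP in Hj.
  by rewrite add0n HxP.
have Hphi : phi r x = phi r y by rewrite Ex /y !phiD !phi_unit mulnC.
have Gx : stuck R rho x.
  split; first by apply/avoidsP => j Hj; apply: Hx; rewrite inE Hj.
  by move=> x' Hx' u Hu Hle; apply: Hne; exists x'; split => //; exists u.
have := cong_avoiding_eq (cong_stuck (Hcomp HxP HyP Hphi) (or_introl Gx)) Hi0.
rewrite /y !ffunE eqxx (_ : x i0 = 0); last by apply: Hx; rewrite inE Hi0.
by have := Hpos HiP; case: (r i).
Qed.

Lemma card_setD_le_count_avoids (R : {set 'I_k}) i0 :
  rels_on P rho -> R \subset P -> i0 \in R -> #|P :\: R| <= count (avoids_side R) rho.
Proof.
move=> Hwf HRP Hi0.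
have -> : count (avoids_side R) rho =
    size (avoiding_rels R rho) + size (half_avoiding_sides R rho).
  by rewrite size_map !size_filter count_andb_addn_neqb.
apply: (@escape_bound _ (P :\: R) _ _ (erefl _)
  (rels_on_avoiding (S := R) Hwf) (sides_on_half_avoiding (S := R) Hwf)).
exact: escape_or_bounded_setD Hi0 (subsetP HRP i0 Hi0).
Qed.

End Counting.
End Vectors.

Arguments vzero {k}.

Section Gluing.
Variable k : nat.
Variable r : 'I_k -> nat.
Local Notation vec := (vec k).
Local Notation phi := (phi r).

Definition rel_within (A : {set 'I_k}) (p : vec * vec) := (supp p.1 :|: supp p.2) \subset A.
Definition glued_by (A B : {set 'I_k}) (wA wB : vec) (rho : seq (vec * vec)) :=
  forall p, p \in rho -> [|| rel_within A p, rel_within B p, p == (wA, wB) | p == (wB, wA)].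

Lemma glued_by_sym A B wA wB rho : glued_by A B wA wB rho -> glued_by B A wB wA rho.
Proof. by move=> H p /H /or4P[] ->; rewrite ?orbT. Qed.

Lemma rel_within_vsupp (A : {set 'I_k}) p : rel_within A p -> vsupp A p.1 /\ vsupp A p.2.
Proof. by rewrite /rel_within subUset => /andP[H1 H2]; split; apply/vsuppE. Qed.

Lemma vrestr_id (A : {set 'I_k}) (x : vec) : vsupp A x -> vrestr A x = x.
Proof. by move=> H; apply/ffunP => i; rewrite ffunE; case: ifP => // /negbT /H ->. Qed.

Lemma vrestr_disjoint (A B : {set 'I_k}) (x : vec) :
  [disjoint A & B] -> vsupp A x -> vrestr B x = vzero.
Proof.
move=> HAB Hx; apply/ffunP => i; rewrite !ffunE; case: ifP => // Hi.
by apply: Hx; rewrite (disjointFl HAB Hi).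
Qed.

Lemma vrestrD (A : {set 'I_k}) (a c : vec) : vrestr A (vadd a c) = vadd (vrestr A a) (vrestr A c).
Proof. by apply/ffunP => i; rewrite !ffunE; case: ifP. Qed.

Section Glue.
Variables (A B : {set 'I_k}) (rho : seq (vec * vec)) (wA wB : vec).
Hypotheses (HAB : [disjoint A & B]) (HwA : vsupp A wA) (HwB : vsupp B wB).
Hypotheses (HD : phi wA = phi wB) (HD0 : 0 < phi wA).
Hypothesis Hrho : glued_by A B wA wB rho.
Hypothesis Hphi : forall p, p \in rho -> phi p.1 = phi p.2.

(* Project to [A] by trading the [B]-part of [z] for the corresponding
   number of copies of [wA]; the remainder modulo [phi wA] is dropped. *)
Definition glue_proj (z : vec) : vec :=
  vadd (vrestr A z) (vscale (phi (vrestr B z) %/ phi wA) wA).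

Let HBA : [disjoint B & A]. Proof. by rewrite disjoint_sym. Qed.

Let phiB_A v : vsupp A v -> phi (vrestr B v) = 0.
Proof. by move=> Hv; rewrite (vrestr_disjoint HAB Hv) phi0. Qed.

Let phiB_B v : vsupp B v -> phi (vrestr B v) = phi v.
Proof. by move=> Hv; rewrite vrestr_id. Qed.

Lemma glue_proj_A v : vsupp A v -> glue_proj v = v.
Proof.
move=> Hv; rewrite /glue_proj phiB_A // div0n vrestr_id //.
by apply/ffunP => i; rewrite !ffunE mul0n addn0.
Qed.

Let glue_proj_B v : vsupp B v -> glue_proj v = vscale (phi v %/ phi wA) wA.
Proof.
move=> Hv; rewrite /glue_proj phiB_B // (vrestr_disjoint HBA Hv).
by apply/ffunP => i; rewrite !ffunE add0n.
Qed.

Lemma glue_proj_cong x y : cong rho x y ->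
  phi (vrestr B x) = phi (vrestr B y) %[mod phi wA] /\
  cong (filter (rel_within A) rho) (glue_proj x) (glue_proj y).
Proof.
set D := phi wA.
have proj_wB : glue_proj wB = wA.
  rewrite glue_proj_B // -HD divnn HD0; apply/ffunP => i; by rewrite !ffunE mul1n.
have proj_gluing : [/\ glue_proj wA = wA, phi (vrestr B wA) = 0 %[mod D]
    & phi (vrestr B wB) = 0 %[mod D]].
  by rewrite glue_proj_A // phiB_A // phiB_B // -HD modnn mod0n.
elim => {x y}.
- move=> a b Hab; case/or4P: (Hrho Hab) => [HA|HB|/eqP[-> ->]|/eqP[-> ->]].
  + have [Ha Hb] := rel_within_vsupp HA.
    rewrite !phiB_A // !glue_proj_A //; split => //.
    by apply: gc_base; rewrite mem_filter HA.
  + have [Ha Hb] := rel_within_vsupp HB.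
    rewrite (phiB_B Ha) (phiB_B Hb) (glue_proj_B Ha) (glue_proj_B Hb) (Hphi Hab).
    by split => //; apply: gc_refl.
  + by case: proj_gluing => -> -> ->; rewrite proj_wB; split => //; apply: gc_refl.
  + by case: proj_gluing => -> -> ->; rewrite proj_wB; split => //; apply: gc_refl.
- by move=> a; split => //; apply: gc_refl.
- by move=> a b _ [IH1 IH2]; split; [rewrite IH1|apply: gc_sym].
- move=> a b c _ [IH1 IH2] _ [IH3 IH4]; split; first by rewrite IH1.
  by apply: gc_trans IH4.
- move=> a b c _ [IH1 IH2].
  have Hsplit z : phi (vrestr B (vadd z c)) = phi (vrestr B z) + phi (vrestr B c).
    by rewrite vrestrD phiD.
  have Hf z : glue_proj (vadd z c) = vadd (glue_proj z)
      (vadd (vrestr A c) (vscale ((phi (vrestr B z) %% D + phi (vrestr B c)) %/ D) wA)).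
    apply/ffunP => i; rewrite /glue_proj -/D Hsplit.
    rewrite {1}(divn_eq (phi (vrestr B z)) D) -addnA divnMDl // !ffunE mulnDl.
    by case: ifP => _; lia.
  split; first by rewrite !Hsplit -modnDml IH1 modnDml.
  by rewrite !Hf IH1; apply: gc_add.
Qed.

Section Presentation.
Variable P : {set 'I_k}.
Hypotheses (HAP : A \subset P) (HBP : B \subset P) (Hcomp : presents r P rho).

Lemma presents_within : presents r A (filter (rel_within A) rho).
Proof.
move=> x y Hx Hy Hxy.
have := (glue_proj_cong (Hcomp (vsupp_sub HAP Hx) (vsupp_sub HAP Hy) Hxy)).2.
by rewrite !glue_proj_A.
Qed.

(* With [l = lcm (r i) (r j)], the vectors [(l / r i) e_i] and [(l / r j) e_j]
   have the same image, and [glue_proj_cong] keeps [B]-parts modulo [phi wA]. *)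
Lemma gluing_dvd_lcm i j : i \in A -> j \in B -> phi wA %| lcmn (r i) (r j).
Proof.
move=> Hi Hj; set l := lcmn (r i) (r j).
set x := vunit i (l %/ r i); set y := vunit j (l %/ r j).
have Hx : vsupp A x by move=> t Ht; rewrite ffunE; case: eqP => // E; rewrite E Hi in Ht.
have Hy : vsupp B y by move=> t Ht; rewrite ffunE; case: eqP => // E; rewrite E Hj in Ht.
have Hxy : phi x = phi y by rewrite !phi_unit !divnK ?dvdn_lcml ?dvdn_lcmr.
have := (glue_proj_cong (Hcomp (vsupp_sub HAP Hx) (vsupp_sub HBP Hy) Hxy)).1.
rewrite (vrestr_disjoint HAB Hx) phi0 (vrestr_id Hy) -Hxy phi_unit divnK ?dvdn_lcml // mod0n.
by move/esym/eqP.
Qed.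

End Presentation.
End Glue.
End Gluing.

Section Induction.
Variable k : nat.
Variable r : 'I_k -> nat.
Local Notation vec := (vec k).
Local Notation phi := (phi r).

Definition gcd_on (P : {set 'I_k}) := \big[gcdn/0]_(i in P) r i.
Definition reduced_rel (P : {set 'I_k}) (p : vec * vec) :=
  [/\ vsupp P p.1 /\ vsupp P p.2, p.1 != vzero, p.2 != vzero,
      phi p.1 = phi p.2 & forall i, p.1 i = 0 \/ p.2 i = 0].
Definition minimal_on (P : {set 'I_k}) :=
  forall i, i \in P -> 0 < r i /\ forall x, vsupp (P :\ i) x -> phi x <> r i.

Lemma gcd_on_dvd (P : {set 'I_k}) (x : vec) : vsupp P x -> gcd_on P %| phi x.
Proof.
move=> Hx; apply: dvdn_sum => i _.
case: (boolP (i \in P)) => Hi; last by rewrite Hx.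
by apply: dvdn_mull; apply: (biggcdn_inf i).
Qed.

Lemma gcd_on_gt0 (P : {set 'I_k}) i : i \in P -> 0 < r i -> 0 < gcd_on P.
Proof.
move=> Hi Hr; have := biggcdn_inf i Hi (dvdnn (r i)); rewrite /gcd_on lt0n.
by apply: contraTneq => ->; rewrite dvd0n -lt0n.
Qed.

Lemma minimal_on_sub (P X : {set 'I_k}) : X \subset P -> minimal_on P -> minimal_on X.
Proof.
move=> HXP Hirr j Hj; have [H1 H2] := Hirr j (subsetP HXP j Hj); split => // x Hx.
by apply: H2; apply: vsupp_sub Hx; apply: setSD.
Qed.

Lemma reduced_rel_within (P A : {set 'I_k}) p :
  reduced_rel P p -> rel_within A p -> reduced_rel A p.
Proof. by move=> [_ H2 H3 H4 H5] /rel_within_vsupp. Qed.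

(* A side of a nonzero relation is not a single generator, by minimality. *)
Lemma double_le_phi (P X : {set 'I_k}) (w w' : vec) c :
  minimal_on P -> X \subset P -> vsupp X w -> w != vzero -> vsupp (P :\: X) w' ->
  phi w = phi w' -> (forall j, j \in X -> c <= r j) -> 2 * c <= phi w.
Proof.
move=> Hirr HXP Hw Hnz Hw' Heq Hc.
have [j Hj] := exists_coord_neq0 Hnz.
have HjX : j \in X by apply: contraR Hj => /Hw ->.
set z : vec := [ffun t => if t == j then (w j).-1 else w t].
have Ew : w = vadd (vunit j 1) z.
  apply/ffunP => t; rewrite !ffunE; case: eqP => [->|_]; last by rewrite add0n.
  by rewrite add1n prednK // lt0n.
have Hz : vsupp X z.
  move=> t Ht; rewrite ffunE; case: eqP => [E|_]; first by rewrite E HjX in Ht.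
  exact: Hw.
have [Z|] := eqVneq z vzero.
  have [_ Hmin] := Hirr j (subsetP HXP j HjX); exfalso; apply: (Hmin w').
  - apply: vsupp_sub Hw'; apply/subsetP => t; rewrite !inE => /andP[Ht ->].
    by rewrite andbT; apply: contraNneq Ht => ->.
  - by rewrite -Heq Ew Z phiD phi0 phi_unit addn0 mul1n.
case/exists_coord_neq0 => t Ht.
have HtX : t \in X by apply: contraR Ht => /Hz ->.
rewrite Ew phiD phi_unit mul1n mul2n -addnn leq_add ?Hc //.
apply: leq_trans (phi_ge r z t); apply: leq_trans (Hc t HtX) _.
by rewrite leq_pmull // lt0n.
Qed.

Lemma phi_gt0 (X : {set 'I_k}) (w : vec) :
  (forall i, i \in X -> 0 < r i) -> vsupp X w -> w != vzero -> 0 < phi w.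
Proof.
move=> Hpos Hw /exists_coord_neq0[j Hj]; apply: leq_trans (phi_ge r w j).
by rewrite muln_gt0 lt0n Hj Hpos //; apply: contraR Hj => /Hw ->.
Qed.

Lemma gcd_on_setD (P A : {set 'I_k}) : A \subset P ->
  gcd_on P = gcdn (gcd_on A) (gcd_on (P :\: A)).
Proof.
move=> HAP; rewrite /gcd_on -bigU ?disjoint_setD //.
by apply: eq_bigl => t; rewrite !inE; case: (boolP (t \in A)) => //= /(subsetP HAP).
Qed.

Lemma dvdn_lcmn_gcd_on (A B : {set 'I_k}) d :
  (forall i j, i \in A -> j \in B -> d %| lcmn (r i) (r j)) -> d %| lcmn (gcd_on A) (gcd_on B).
Proof.
move=> H; rewrite /gcd_on lcmn_biggcdl; apply/dvdn_biggcdP => i Hi.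
by rewrite lcmnC lcmn_biggcdl; apply/dvdn_biggcdP => j Hj; rewrite lcmnC; apply: H.
Qed.

Lemma meets_supp (R : {set 'I_k}) (x : vec) : (supp x :&: R != set0) = ~~ avoids R x.
Proof.
apply/set0Pn/idP => [[i]|].
  by rewrite !inE => /andP[Hx Hi]; apply: contra Hx => /avoidsP ->.
by case/forall_inPn => i Hi Hx; exists i; rewrite !inE Hx.
Qed.

Definition gens_bound n := forall (P : {set 'I_k}) (rho : seq (vec * vec)),
  #|P| = n.+1 -> minimal_on P -> (forall p, p \in rho -> reduced_rel P p) ->
  presents r P rho -> size rho <= n -> forall i, i \in P -> 2 ^ n * gcd_on P <= r i.

Section Step.
Variables (P : {set 'I_k}) (rho : seq (vec * vec)).
Hypotheses (Hirr : minimal_on P) (Hwf : forall p, p \in rho -> reduced_rel P p).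
Hypothesis Hcomp : presents r P rho.

Let Hpos i : i \in P -> 0 < r i. Proof. by case/Hirr. Qed.

Lemma reduced_rels_on : rels_on P rho.
Proof. by move=> p /Hwf[[? ?] ? ? _ _]. Qed.

Lemma card_le_size i0 : i0 \in P -> #|P|.-1 <= size rho.
Proof.
move=> Hi0; have HR : [set i0] \subset P by rewrite sub1set.
have := card_setD_le_count_avoids Hpos Hcomp reduced_rels_on HR (set11 i0).
rewrite (cardsD1 i0 P) Hi0 add1n /=; move/leq_trans; apply; exact: count_size.
Qed.

Definition rel_label (p : vec * vec) := (supp p.1, supp p.2).

Lemma rel_labels_proper l : l \in map rel_label rho -> proper_label P l.
Proof.
case/mapP => p Hp ->; have [[H1 H2] H3 H4 _ H6] := Hwf Hp.
apply/and5P; split => /=; try by apply/vsuppE.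
- by case/exists_coord_neq0: H3 => i Hi; apply/set0Pn; exists i; rewrite inE.
- by case/exists_coord_neq0: H4 => i Hi; apply/set0Pn; exists i; rewrite inE.
rewrite -setI_eq0; apply/eqP/setP => j; rewrite !inE.
by case: (H6 j) => ->; rewrite ?eqxx ?andbF.
Qed.

Lemma rel_labels_sparse : size rho = #|P|.-1 -> sparse P (map rel_label rho).
Proof.
move=> Hsz R HRP /set0Pn[j Hj].
have := card_setD_le_count_avoids Hpos Hcomp reduced_rels_on HRP Hj.
rewrite count_map (@eq_count _ (preim rel_label _) (predC (avoids_side R))); last first.
  by move=> p; rewrite /= /meets_both /rel_label /= !meets_supp negb_or.
have := count_predC (avoids_side R) rho.
have := subset_leq_card HRP; have : 0 < #|R| by apply/card_gt0P; exists j.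
rewrite cardsD (setIidPr HRP) Hsz; lia.
Qed.

Lemma exists_separating_rel : 1 < #|P| -> size rho = #|P|.-1 ->
  exists p0 (A : {set 'I_k}), [/\ p0 \in rho, A \subset P, A != set0, P :\: A != set0 &
    forall p, p \in rem p0 rho -> rel_within A p \/ rel_within (P :\: A) p].
Proof.
move=> HP Hsz; have HP2 : #|P| = (#|P| - 2).+2 by lia.
have HL : size (map rel_label rho) = (#|P| - 2).+1 by rewrite size_map Hsz; lia.
have [l0 [L0 [HpL [A [HAP HAn HBn Hins]]]]] :=
  separating_label HP2 HL rel_labels_proper (rel_labels_sparse Hsz).
have : l0 \in map rel_label rho by rewrite (perm_mem HpL) mem_head.
case/mapP => p0 Hp0 El0.
have HpR : perm_eq (map rel_label (rem p0 rho)) L0.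
  rewrite -(perm_cons l0); apply: perm_trans HpL.
  by rewrite El0 -map_cons; apply: perm_map; rewrite perm_sym perm_to_rem.
exists p0, A; split => // p Hp; apply: (Hins (rel_label p)).
by rewrite -(perm_mem HpR); apply: map_f.
Qed.

Lemma rel_within_disjoint (X Y : {set 'I_k}) p : [disjoint X & Y] -> p \in rho ->
  rel_within X p -> rel_within Y p -> False.
Proof.
move=> HXY Hp /rel_within_vsupp[HX _] /rel_within_vsupp[HY _].
have [_ Hnz _ _ _] := Hwf Hp; case/exists_coord_neq0: Hnz => j Hj.
have HjX : j \in X by apply: contraR Hj => /HX ->.
have HjY : j \in Y by apply: contraR Hj => /HY ->.
by move: (disjointFr HXY HjX); rewrite HjY.
Qed.

Lemma count_avoids_side (X Y : {set 'I_k}) (s : seq (vec * vec)) :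
  [disjoint X & Y] -> {subset s <= rho} ->
  (forall p, p \in s -> rel_within X p \/ rel_within Y p) ->
  count (avoids_side X) s = count (rel_within Y) s.
Proof.
move=> HXY Hs Hdich; apply: eq_in_count => p Hp.
have [_ Hnz1 Hnz2 _ _] := Hwf (Hs p Hp).
case: (Hdich p Hp) => H.
  have [H1 H2] := rel_within_vsupp H.
  rewrite /avoids_side !vsupp_avoidsF //; symmetry; apply/negP.
  exact: rel_within_disjoint HXY (Hs p Hp) H.
have [H1 _] := rel_within_vsupp H.
by rewrite H /avoids_side (vsupp_avoids H1) // disjoint_sym.
Qed.

Section Separated.
Variables (p0 : vec * vec) (A : {set 'I_k}).
Hypotheses (Hsz : size rho = #|P|.-1) (Hp0 : p0 \in rho) (HAP : A \subset P).
Hypotheses (HAn : A != set0) (HBn : P :\: A != set0).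
Hypothesis Hrem : forall p, p \in rem p0 rho -> rel_within A p \/ rel_within (P :\: A) p.
Local Notation B := (P :\: A).
Local Notation cA := (count (rel_within A) (rem p0 rho)).
Local Notation cB := (count (rel_within B) (rem p0 rho)).

Let HAB : [disjoint A & B]. Proof. exact: disjoint_setD. Qed.
Let HBA : [disjoint B & A]. Proof. by rewrite disjoint_sym. Qed.
Let HBP : B \subset P. Proof. exact: subsetDl. Qed.
Let Hrem_mem : {subset rem p0 rho <= rho}. Proof. exact: mem_rem. Qed.

Lemma count_within_rem : cA + cB = (size rho).-1.
Proof.
rewrite -(size_rem Hp0) -count_predUI.
rewrite (@eq_in_count _ (predI _ _) pred0) ?count_pred0 ?addn0; last first.
  by move=> p Hp /=; apply/negP => /andP[H1 H2]; apply: rel_within_disjoint HAB (mem_rem Hp) H1 H2.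
rewrite (@eq_in_count _ _ predT) ?count_predT // => p Hp /=.
by case: (Hrem Hp) => ->; rewrite ?orbT.
Qed.

(* The counting bound applied to [A] and to [B] leaves no room to spare. *)
Lemma block_sizes : [/\ avoids_side A p0, avoids_side B p0, #|A| = cA.+1 & #|B| = cB.+1].
Proof.
have [iA HiA] := set0Pn _ HAn; have [iB HiB] := set0Pn _ HBn.
have := card_setD_le_count_avoids Hpos Hcomp reduced_rels_on HAP HiA.
rewrite (count_rem_mem _ Hp0) (count_avoids_side HAB Hrem_mem Hrem).
have := card_setD_le_count_avoids Hpos Hcomp reduced_rels_on HBP HiB.
have Hrem' p : p \in rem p0 rho -> rel_within B p \/ rel_within A p.
  by move=> Hp; case: (Hrem Hp); [right|left].
rewrite (count_rem_mem _ Hp0) (count_avoids_side HBA Hrem_mem Hrem').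
rewrite setDDr setDv set0U (setIidPr HAP).
have := count_within_rem; rewrite Hsz -(cardsID A P) (setIidPr HAP).
have : 0 < #|A| by apply/card_gt0P; exists iA.
have : 0 < #|B| by apply/card_gt0P; exists iB.
exact: tight_count_bounds.
Qed.

Lemma gluing_pair : exists wA wB, [/\ vsupp A wA, vsupp B wB, wA != vzero /\ wB != vzero,
  phi wA = phi wB & glued_by A B wA wB rho].
Proof.
have [HoA HoB _ _] := block_sizes.
have [[Hp1 Hp2] Hnz1 Hnz2 Hphi _] := Hwf Hp0.
have glued (wA wB : vec) : (p0 == (wA, wB)) || (p0 == (wB, wA)) -> glued_by A B wA wB rho.
  move=> Hw p Hp; have [->|Hne] := eqVneq p p0; first by case/orP: Hw => ->; rewrite !orbT.
  by case: (Hrem (rem_mem Hne Hp)) => ->; rewrite ?orbT.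
have HBA' : P :\: B \subset A by rewrite setDDr setDv set0U subsetIr.
move: HoA HoB; rewrite /avoids_side; case HA1: (avoids A p0.1) => /= HoA HoB.
  have HB1 := vsupp_setD Hp1 HA1.
  move: HoB; rewrite (vsupp_avoidsF HB1 Hnz1) /= => HB2.
  exists p0.2, p0.1; split => //; first exact: vsupp_sub HBA' (vsupp_setD Hp2 HB2).
  by apply: glued; case: (p0) => a b; rewrite eqxx orbT.
have HB2 := vsupp_setD Hp2 HoA.
move: HoB; rewrite (vsupp_avoidsF HB2 Hnz2) orbF => HB1.
exists p0.1, p0.2; split => //; first exact: vsupp_sub HBA' (vsupp_setD Hp1 HB1).
by apply: glued; case: (p0) => a b; rewrite eqxx.
Qed.

Hypothesis IH : forall m, m < size rho -> gens_bound m.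

(* [p0] lies in no block, so [X] keeps [count (rel_within X) (rem p0 rho)] relations. *)
Lemma block_bound (X Y : {set 'I_k}) (wX wY : vec) :
  X \subset P -> [disjoint X & Y] -> vsupp X wX -> vsupp Y wY -> wX != vzero ->
  phi wX = phi wY -> glued_by X Y wX wY rho -> avoids_side X p0 ->
  #|X| = (count (rel_within X) (rem p0 rho)).+1 ->
  forall i, i \in X -> 2 ^ count (rel_within X) (rem p0 rho) * gcd_on X <= r i.
Proof.
move=> HXP HXY HwX HwY HwX0 HD Hgl HoX HcX.
have [_ Hnz1 Hnz2 _ _] := Hwf Hp0.
have Hp0X : rel_within X p0 = false.
  by apply/negP => /rel_within_vsupp[H1 H2]; move: HoX; rewrite /avoids_side !vsupp_avoidsF.
have Hc : count (rel_within X) (rem p0 rho) < size rho.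
  apply: leq_ltn_trans (count_size _ _) _.
  by rewrite size_rem // ltn_predL; case: (rho) Hp0.
apply: (IH Hc (rho := filter (rel_within X) rho) HcX (minimal_on_sub HXP Hirr)).
- by move=> p; rewrite mem_filter => /andP[HpX /Hwf Hp]; apply: reduced_rel_within Hp HpX.
- have HD0 : 0 < phi wX by apply: phi_gt0 HwX HwX0 => i /(subsetP HXP); apply: Hpos.
  by apply: presents_within HXY HwX HwY HD HD0 Hgl _ _ HXP Hcomp => p /Hwf[].
- by rewrite size_filter (count_rem_mem _ Hp0) Hp0X.
Qed.

(* The common value [D] of the gluing relation divides the lcm of the two
   block gcds and, by minimality, is at least twice every generator of either
   block; hence each block gcd is at least [2 ^ #|other block|] times [gcd_on P]. *)
Lemma separated_step i : i \in P -> 2 ^ size rho * gcd_on P <= r i.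
Proof.
have [HoA HoB HcA HcB] := block_sizes.
have [wA [wB [HwA HwB [HwA0 HwB0] HD Hgl]]] := gluing_pair.
have IHA := block_bound HAP HAB HwA HwB HwA0 HD Hgl HoA HcA.
have IHB := block_bound HBP HBA HwB HwA HwB0 (esym HD) (glued_by_sym Hgl) HoB HcB.
have HD0 : 0 < phi wA by apply: phi_gt0 HwA HwA0 => j /(subsetP HAP); apply: Hpos.
have [[iA HiA] [iB HiB]] := (set0Pn _ HAn, set0Pn _ HBn).
have gA0 := gcd_on_gt0 HiA (Hpos (subsetP HAP _ HiA)).
have gB0 := gcd_on_gt0 HiB (Hpos (subsetP HBP _ HiB)).
have Hdvd : phi wA %| lcmn (gcd_on A) (gcd_on B).
  apply: dvdn_lcmn_gcd_on => j t Hj Ht.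
  by apply: gluing_dvd_lcm HAB HwA HwB HD HD0 Hgl _ _ HAP HBP Hcomp _ _ Hj Ht => p /Hwf[].
have HmB : 2 * (2 ^ cB * gcd_on B) <= phi wA.
  rewrite HD; apply: double_le_phi Hirr HBP HwB HwB0 _ (esym HD) IHB.
  by apply: vsupp_sub HwA; rewrite setDDr setDv set0U subsetI HAP subxx.
have HmA : 2 * (2 ^ cA * gcd_on A) <= phi wA.
  exact: double_le_phi Hirr HAP HwA HwA0 (vsupp_sub (subxx _) HwB) HD IHA.
have Esz : size rho = (cA + cB).+1.
  by rewrite count_within_rem prednK //; case: (rho) Hp0.
move=> Hi; rewrite (gcd_on_setD HAP) Esz; case: (boolP (i \in A)) => HiA'.
  exact: gcdn_glue_le gA0 gB0 Hdvd HmB (IHA i HiA').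
rewrite addnC gcdnC; apply: gcdn_glue_le gB0 gA0 _ HmA (IHB i _); first by rewrite lcmnC.
by rewrite inE HiA' Hi.
Qed.
End Separated.
End Step.

Theorem gens_bound_holds n : gens_bound n.
Proof.
elim/ltn_ind: n => n IH P rho HP Hirr Hwf Hcomp Hsz.
have [i0 Hi0] : exists i0, i0 \in P by apply/card_gt0P; rewrite HP.
case: n IH HP Hsz => [|n] IH HP Hsz.
  move/eqP/cards1P: HP => [j ->] i; rewrite inE => /eqP ->.
  by rewrite /gcd_on big_set1 mul1n.
have Hsz' : size rho = #|P|.-1.
  by apply/eqP; rewrite eqn_leq HP Hsz -HP (card_le_size Hirr Hwf Hcomp Hi0).
have HP1 : 1 < #|P| by rewrite HP.
have [p0 [A [Hp0 HAP HAn HBn Hrem]]] := exists_separating_rel Hirr Hwf Hcomp HP1 Hsz'.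
have En : n.+1 = size rho by rewrite Hsz' HP.
rewrite En; apply: (separated_step Hirr Hwf Hcomp Hsz' Hp0 HAP HAn HBn Hrem) => //.
by move=> m; rewrite -En; apply: IH.
Qed.

End Induction.

Section Semigroup.
Variables (S : pred nat) (k : nat) (r : 'I_k -> nat).
Local Notation vec := (vec k).
Local Notation phi := (phi r).

Lemma phi_eq0 (x : vec) : (forall i, 0 < r i) -> phi x = 0 -> x = vzero.
Proof.
move=> Hpos H; apply/ffunP => i; rewrite ffunE.
have := phi_ge r x i; rewrite H leqn0 muln_eq0 => /orP[/eqP //|].
by rewrite eqn0Ngt Hpos.
Qed.

Lemma generates_drop i (x : vec) :
  generates S r predT -> x i = 0 -> phi x = r i -> generates S r (predC1 i).
Proof.
move=> Hgen Hxi Hx n; split; last by case=> a [_ ->]; apply/Hgen; exists a.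
case/Hgen => a [_ ->].
exists (vadd (vrestr (~: [set i]) a) (vscale (a i) x)); split.
  by move=> j; rewrite /= negbK => /eqP ->; rewrite !ffunE !inE eqxx Hxi muln0.
rewrite phiD phiZ Hx phi_vrestr /phi (bigD1 i) //= addnC; congr (_ + _).
by apply: eq_bigl => j; rewrite !inE.
Qed.

Lemma minimal_generating_minimal_on :
  minimal_generating_system S r -> minimal_on r [set: 'I_k].
Proof.
move=> [_ [Hgen Hmin]] i _.
have Hdrop (x : vec) : x i = 0 -> phi x <> r i.
  by move=> Hxi Hx; have := Hmin _ (generates_drop Hgen Hxi Hx) i; rewrite /= eqxx.
split; last by move=> x Hx; apply: Hdrop; apply: Hx; rewrite !inE eqxx.
by rewrite lt0n; apply/eqP => Hri; apply: (Hdrop vzero); rewrite ?phi0 ?ffunE.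
Qed.

Definition vmin (a b : vec) : vec := [ffun j => minn (a j) (b j)].
Definition cancel_common (p : vec * vec) : vec * vec :=
  ([ffun j => p.1 j - vmin p.1 p.2 j], [ffun j => p.2 j - vmin p.1 p.2 j]).

Lemma cancel_common1 p : p.1 = vadd (cancel_common p).1 (vmin p.1 p.2).
Proof. by apply/ffunP => j; rewrite !ffunE subnK // geq_minl. Qed.

Lemma cancel_common2 p : p.2 = vadd (cancel_common p).2 (vmin p.1 p.2).
Proof. by apply/ffunP => j; rewrite !ffunE subnK // geq_minr. Qed.

Lemma reduced_rel_cancel_common p : (forall i, 0 < r i) -> p.1 != p.2 ->
  phi p.1 = phi p.2 -> reduced_rel r [set: 'I_k] (cancel_common p).
Proof.
move=> Hpos Hne Hp.
have E1 := cancel_common1 p; have E2 := cancel_common2 p.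
have Heq : phi (cancel_common p).1 = phi (cancel_common p).2.
  by apply/(@addIn (phi (vmin p.1 p.2))); rewrite -!phiD -E1 -E2.
have Hboth : (cancel_common p).1 = vzero -> (cancel_common p).2 != vzero.
  set c := vmin p.1 p.2 in E1 E2.
  by move=> H1; apply/negP => /eqP H2; move: Hne; rewrite E1 E2 H1 H2 eqxx.
split => //.
- by split => i; rewrite inE.
- apply/eqP => H1; move/eqP: (Hboth H1); apply.
  by apply: (phi_eq0 Hpos); rewrite -Heq H1 phi0.
- apply/eqP => H2; have H1 : (cancel_common p).1 = vzero.
    by apply: (phi_eq0 Hpos); rewrite Heq H2 phi0.
  by move: (Hboth H1); rewrite H2 eqxx.
- move=> j; rewrite !ffunE /minn; case: ltnP => _; rewrite subnn; by [left | right].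
Qed.

Lemma presents_cancel_common (rho : seq (vec * vec)) :
  presentation r (fun a b => (a, b) \in rho) ->
  presents r [set: 'I_k] [seq cancel_common p | p <- rho & p.1 != p.2].
Proof.
move=> Hpres x y _ _ /(Hpres x y).2; apply: gen_cong_sub => a b Hab.
have [->|Hne] := eqVneq a b; first exact: gc_refl.
have E1 : vadd (cancel_common (a, b)).1 (vmin a b) = a := esym (cancel_common1 (a, b)).
have E2 : vadd (cancel_common (a, b)).2 (vmin a b) = b := esym (cancel_common2 (a, b)).
have Hin : cancel_common (a, b) \in [seq cancel_common p | p <- rho & p.1 != p.2].
  by apply/mapP; exists (a, b); rewrite ?mem_filter ?Hne.
have := gc_add (vmin a b) (@gc_base _ (fun a b => (a, b) \in _) _ _ Hin).
by rewrite E1 E2.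
Qed.

Lemma complete_intersection_gen_bound : minimal_generating_system S r ->
  complete_intersection r -> forall i, 2 ^ k.-1 * gcd_on r [set: 'I_k] <= r i.
Proof.
move=> Hmgs [rho [[_ [Hpres _]] Hsize]] i.
have Hmin := minimal_generating_minimal_on Hmgs.
have Hpos j : 0 < r j by case: (Hmin j (in_setT j)).
have Hk : 0 < k := leq_ltn_trans (leq0n i) (ltn_ord i).
have Hphi p : p \in rho -> phi p.1 = phi p.2 by case: p => a b Hp; apply/(Hpres a b)/gc_base.
apply: (gens_bound_holds (rho := [seq cancel_common p | p <- rho & p.1 != p.2])) => //.
- by rewrite cardsT card_ord prednK.
- move=> q /mapP[p]; rewrite mem_filter => /andP[Hne Hp] ->.
  exact: reduced_rel_cancel_common Hne (Hphi p Hp).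
- exact: presents_cancel_common.
- by rewrite size_map size_filter -subn1 -Hsize count_size.
Qed.

Section Frobenius.
Variable F : nat.
Hypotheses (Hgen : generates S r predT) (HF : frobenius S F).

Lemma phi_of_gt_frobenius n : F < n -> exists a : vec, n = phi a.
Proof. by move=> Hn; have [a [_ ->]] := (Hgen n).1 (HF.2 n Hn); exists a. Qed.

Lemma gcd_on_setT_frobenius : gcd_on r [set: 'I_k] = 1.
Proof.
have [a Ha] := phi_of_gt_frobenius (ltnSn F).
have [b Hb] := phi_of_gt_frobenius (leqnSn F.+1).
have Hsupp (v : vec) : vsupp [set: 'I_k] v by move=> i; rewrite inE.
have Ha' := gcd_on_dvd r (Hsupp a); have Hb' := gcd_on_dvd r (Hsupp b).
rewrite -Ha in Ha'; rewrite -Hb -addn1 in Hb'.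
by move: Hb'; rewrite (dvdn_addr _ Ha') dvdn1 => /eqP.
Qed.

Lemma exists_gen_le_conductor : exists i, r i <= F.+1.
Proof.
have [a Ha] := phi_of_gt_frobenius (ltnSn F).
have : a != vzero by apply/eqP => Ea; move: Ha; rewrite Ea phi0.
case/exists_coord_neq0 => i Hi; exists i; rewrite Ha.
by apply: leq_trans (phi_ge r a i); rewrite leq_pmull // lt0n.
Qed.

End Frobenius.
End Semigroup.

From Stdlib Require Import Reals Lra.

Lemma INR_expn2 n : INR (expn 2 n) = (2 ^ n)%R.
Proof. by elim: n => [//|n IH]; rewrite expnS -multE mult_INR IH. Qed.

Lemma INR_le_log2_succ (e m : nat) : 0 < e -> expn 2 e.-1 <= m ->
  (INR e <= ln (INR m) / ln 2 + 1)%R.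
Proof.
move=> He Hm; rewrite -(prednK He) S_INR; apply: Rplus_le_compat_r.
have Hln2 : (0 < ln 2)%R by rewrite -ln_1; apply: ln_increasing; lra.
have H2 : (0 < 2 ^ e.-1)%R by apply: pow_lt; lra.
have Hle : (2 ^ e.-1 <= INR m)%R by rewrite -INR_expn2; apply/le_INR/leP.
apply: (Rmult_le_reg_r (ln 2)) => //; rewrite /Rdiv Rmult_assoc Rinv_l ?Rmult_1_r; last lra.
rewrite -ln_pow; last lra.
by case: (Rle_lt_or_eq_dec _ _ Hle) => [/(ln_increasing _ _ H2) /Rlt_le|->]; [|apply: Rle_refl].
Qed.

Theorem corollary2p7 (S : pred nat) (k : nat) (r : 'I_k -> nat) (F : nat) :
  numerical_semigroup S ->
  (exists n, ~~ S n) ->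
  minimal_generating_system S r ->
  complete_intersection r ->
  frobenius S F ->
  (INR k <= ln (INR (F + 1)) / ln 2 + 1)%R.
Proof.
move=> _ _ Hmgs Hci HF.
have Hgen : generates S r predT by case: Hmgs => _ [].
have [i Hi] := exists_gen_le_conductor Hgen HF.
apply: INR_le_log2_succ; first exact: leq_ltn_trans (leq0n i) (ltn_ord i).
have := complete_intersection_gen_bound Hmgs Hci i.
by rewrite (gcd_on_setT_frobenius Hgen HF) muln1 addn1 => /leq_trans; apply.
Qed.
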